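(* Let $\Gamma$ be a compact and connected metric graph. (i) A vector bundle $E$ of rank $n$ on $\Gamma$ is isomorphic to $E(\lambda)$ for some $S_n\ltimes\mathbb{R}^n$-local system $\lambda$ if and only if $E$ is semistable and of degree zero. Moreover, $E(\lambda)$ is stable if and only if the representation $\pi_1(\Gamma)\to S_n$ associated to $\lambda$ is indecomposable. (ii) Two $S_n\ltimes\mathbb{R}^n$-local systems $\lambda_1,\lambda_2$ give rise to isomorphic vector bundles $E(\lambda_1)\simeq E(\lambda_2)$ if and only if they define the same cover $f:\widetilde\Gamma\to\Gamma$ and the classes of the induced $\mathbb{R}$-local systems $\widetilde\lambda_1,\widetilde\lambda_2$ in $\mathrm{Jac}(\widetilde\Gamma)$ are equal.
   Context: Metric graphs, piecewise linear functions with integer slopes, divisors, $\mathrm{div}$, and the sheaf $\mathcal{H}_\Gamma$ of harmonic functions (piecewise linear functions $f$ with $\mathrm{div}(f)=0$, i.e. affine with integer slope along edges and with outgoing slopes summing to zero at every point) are as usual in tropical geometry. A vector bundle of rank $n$ on $\Gamma$ is a torsor under the sheaf of groups $S_n\ltimes\mathcal{H}_\Gamma^n$; with respect to an oriented simple model and its star cover it is given by transition data $(\sigma^e,g^e_1,\dots,g^e_n)$ on edges $e$ ($\sigma^e\in S_n$, $g^e_i$ affine with integer slope), viewed as a matrix over $\mathbb{T}=\mathbb{R}\cup\{\infty\}$ with finite entries $g^e_{i\sigma^e(i)}=g^e_i$. Its degree is the sum over edges of the slopes of all finite entries; its slope is $\mu(E)=\deg E/\mathrm{rk}\,E$. A rank-$m$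 bundle $F$ is a subbundle of $E$ if transition data can be chosen so that each transition matrix of $E$ has the block form $\begin{bmatrix} h^e & \ast\\ \infty & \ast\end{bmatrix}$ with $h^e$ the transition matrix of $F$. $E$ is semistable if $\mu(F)\le\mu(E)$ for all subbundles $F$, stable if the inequality is strict for proper nonzero subbundles. The constant functions give a subsheaf $\mathbb{R}\subset\mathcal{H}_\Gamma$ and hence a subsheaf $S_n\ltimes\mathbb{R}^n\subset S_n\ltimes\mathcal{H}^n_\Gamma$. An $S_n\ltimes\mathbb{R}^n$-local system $\lambda$ is a torsor under this locally constant sheaf; $E(\lambda)$ is the vector bundle obtained by extension of structure sheaf (a vector bundle with constant transition functions). The $S_n$-part of $\lambda$ gives a representation $\pi_1(\Gamma)\to S_n$ (up to conjugacy) and thus a free cover $f:\widetilde\Gamma\to\Gamma$ of degree $n$ (isometric covering map, $\widetilde\Gamma$ possibly disconnected), and there is an $\mathbb{R}$-local system $\widetilde\lambda$ on $\widetilde\Gamma$ with $f_\ast\widetilde\lambda=\lambda$; both are unique up to isomorphism. The representation is called indecomposable if it is transitive on $\{1,\dots,n\}$. The sheaf $\Omega_{\widetilde\Gamma}$ of harmonic $1$-forms is defined by the exact sequence $0\to\mathbb{R}\to\mathcal{H}_{\widetilde\Gamma}\to\Omega_{\widetilde\Gamma}\to0$, and $\mathrm{Jac}(\widetilde\Gamma)=H^1(\widetilde\Gamma,\mathbb{R})/\Omega_{\widetilde\Gamma}(\widetilde\Gamma)$, the quotient by the image of the connecting homomorphism; the class of $\widetilde\lambda$ is the image of its class in $H^1(\widetilde\Gamma,\mathbb{R})$.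 *)

From HB Require Import structures.
From mathcomp Require Import all_boot all_order all_algebra all_fingroup.
From mathcomp Require Import reals.
Set Implicit Arguments. Unset Strict Implicit. Unset Printing Implicit Defensive.
Import Order.TTheory GRing.Theory Num.Theory.
Local Open Scope ring_scope.

(* A compact metric graph, given by an oriented model: finite vertex  *)
(* and edge sets, each edge e identified with [0, len e], tail at 0.  *)
Record model (R : Type) := Model {
  V : finType; Ed : finType;
  tl : Ed -> V; hd : Ed -> V;
  len : Ed -> R }.

Section Defs.
Variable R : realType.
Variable G : model R.
Notation V := (V G). Notation Ed := (Ed G).
Notation tl := (@tl R G). Notation hd := (@hd R G). Notation len := (@len R G).

Definition adjacent : rel V :=
  fun x y => [exists e : Ed, ((tl e == x) && (hd e == y)) || ((tl e == y) && (hd e == x))].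

Definition simple_connected_model : Prop :=
  [/\ (0 < #|V|)%N,
      (forall e, 0 < len e),
      (forall e, tl e != hd e),
      (forall e e', ((tl e == tl e') && (hd e == hd e')) || ((tl e == hd e') && (hd e == tl e'))
                     -> e = e')
    & (forall x y, connect adjacent x y)].

Variable n : nat.

(* Transition data of a rank-n vector bundle w.r.t. the star cover:    *)
(* on edge e the (tropical, monomial) transition matrix has the finite *)
(* entry at (i, tperm e i), equal to the affine function               *)
(*      t |-> toff e i + (tslp e i) * t ,  t in [0, len e].            *)
Record tdata := TData {
  tperm : Ed -> {perm 'I_n};
  toff : Ed -> 'I_n -> R;
  tslp : Ed -> 'I_n -> int }.

(* A section of S_n ⋉ H^n over the star of each vertex v:             *)
(* a permutation gperm v, and for each i a harmonic function on the    *)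
(* star, given by its value gval v i at v and its integer outgoing     *)
(* slopes gslp v e i along the incident edges e.                       *)
Record gauge := Gauge {
  gperm : V -> {perm 'I_n};
  gval : V -> 'I_n -> R;
  gslp : V -> Ed -> 'I_n -> int }.

Definition harmonic_gauge (P : gauge) : Prop :=
  forall v i, \sum_(e : Ed | (tl e == v) || (hd e == v)) gslp P v e i = 0.

(* restriction to edge e (coordinate t in [0,len e]) of the harmonic    *)
(* function (v,i) of P : offset and slope of the affine function        *)
Definition roff (P : gauge) v e i : R :=
  if tl e == v then gval P v i else gval P v i + (gslp P v e i)%:~R * len e.
Definition rslp (P : gauge) v e i : int :=
  if tl e == v then gslp P v e i else - gslp P v e i.

(* Isomorphism of bundles: A' ⊙ P_(hd e) = P_(tl e) ⊙ A on every edge   *)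
(* (product of monomial tropical matrices written out).                 *)
Definition bundle_iso (A A' : tdata) : Prop :=
  exists P : gauge, harmonic_gauge P /\
   forall e, [/\ (tperm A' e * gperm P (hd e))%g = (gperm P (tl e) * tperm A e)%g,
     (forall i, toff A' e i + roff P (hd e) e (tperm A' e i)
                = roff P (tl e) e i + toff A e (gperm P (tl e) i))
   & (forall i, tslp A' e i + rslp P (hd e) e (tperm A' e i)
                = rslp P (tl e) e i + tslp A e (gperm P (tl e) i))].

Definition deg (A : tdata) : int := \sum_(e : Ed) \sum_(i : 'I_n) tslp A e i.
Definition mu (A : tdata) : rat := (deg A)%:~R / n%:R.

(* S_n ⋉ R^n local systems: constant transition data *)
Record ldata := LData {
  lperm : Ed -> {perm 'I_n};
  lconst : Ed -> 'I_n -> R }.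

Definition bundle_of_ls (l : ldata) : tdata :=
  TData (lperm l) (lconst l) (fun _ _ => 0).

Definition step_src (s : Ed * bool) := if s.2 then tl s.1 else hd s.1.
Definition step_dst (s : Ed * bool) := if s.2 then hd s.1 else tl s.1.

Fixpoint walk_end (u : V) (w : seq (Ed * bool)) : option V :=
  match w with
  | [::] => Some u
  | s :: w' => if step_src s == u then walk_end (step_dst s) w' else None
  end.

Definition step_perm (l : ldata) (s : Ed * bool) : {perm 'I_n} :=
  if s.2 then lperm l s.1 else ((lperm l s.1)^-1)%g.

(* monodromy along a walk: (p * q) x = q (p x), so steps act in order *)
Definition monodromy (l : ldata) (w : seq (Ed * bool)) : {perm 'I_n} :=
  foldr (fun s acc => (step_perm l s * acc)%g) 1%g w.

(* the representation pi_1(Gamma, v0) -> S_n is transitive on {1..n} *)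
Definition indecomposable (l : ldata) : Prop :=
  forall (v0 : V) (i j : 'I_n), exists w, walk_end v0 w = Some v0 /\ monodromy l w i = j.

End Defs.

Arguments TData {R G n}.

Section Defs2.
Variable R : realType.
Variable G : model R.
Notation V := (V G). Notation Ed := (Ed G).
Notation tl := (@tl R G). Notation hd := (@hd R G). Notation len := (@len R G).

(* F (rank m) is a subbundle of E (rank n): representatives E', F' can  *)
(* be chosen with E' = [[F', *], [oo, *]] blockwise on every edge.      *)
Definition subbundle (m n : nat) (F : tdata G m) (E : tdata G n) : Prop :=
  (m <= n)%N /\
  exists (E' : tdata G n) (F' : tdata G m),
   [/\ bundle_iso E E', bundle_iso F F' &
   forall e : Ed,
    (forall j : 'I_n, (m <= j)%N -> (m <= tperm E' e j)%N) /\
    (forall (i : 'I_m) (j : 'I_n), val i = val j ->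
       [/\ val (tperm E' e j) = val (tperm F' e i),
           toff E' e j = toff F' e i & tslp E' e j = tslp F' e i])].

Definition semistable (n : nat) (E : tdata G n) : Prop :=
  forall (m : nat) (F : tdata G m), (0 < m)%N -> subbundle F E -> (mu F <= mu E)%R.

Definition stable (n : nat) (E : tdata G n) : Prop :=
  forall (m : nat) (F : tdata G m), (0 < m)%N -> (m < n)%N -> subbundle F E ->
    (mu F < mu E)%R.

(* The cover of l: vertices V x 'I_n, edges Ed x 'I_n, edge (e,i) going  *)
(* from (tl e, i) to (hd e, lperm l e i), same lengths.  The R-local     *)
(* system l~ has the constant lconst l e i on the edge (e,i).            *)

Definition cover_iso (n : nat) (l1 l2 : ldata G n) (tau : V -> {perm 'I_n}) : Prop :=
  forall e, (tau (tl e) * lperm l2 e)%g = (lperm l1 e * tau (hd e))%g.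

(* Omega(Gamma~)(Gamma~): integer harmonic 1-forms = integer flows on the *)
(* cover satisfying Kirchhoff's law at every vertex (v,j).              *)
Definition cover_int_flow (n : nat) (l : ldata G n) (m : Ed -> 'I_n -> int) : Prop :=
  forall (v : V) (j : 'I_n),
    \sum_(e : Ed | tl e == v) m e j =
    \sum_(e : Ed | hd e == v) \sum_(i : 'I_n | lperm l e i == j) m e i.

(* Equality in Jac(Gamma~) = H^1(Gamma~,R) / Omega(Gamma~)(Gamma~) of the   *)
(* classes of two R-cocycles c, c' (constants on the cover edges):        *)
(* H^1 = R^{edges}/coboundaries, and the connecting map sends a flow m    *)
(* to the cocycle (e,i) |-> len e * m e i.                                *)
Definition jac_eq (n : nat) (l : ldata G n) (c c' : Ed -> 'I_n -> R) : Prop :=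
  exists (a : V -> 'I_n -> R) (m : Ed -> 'I_n -> int),
    cover_int_flow l m /\
    forall e i, c e i - c' e i = a (hd e) (lperm l e i) - a (tl e) i + (m e i)%:~R * len e.

Definition same_cover_same_jac (n : nat) (l1 l2 : ldata G n) : Prop :=
  exists tau : V -> {perm 'I_n}, cover_iso l1 l2 tau /\
    jac_eq l1 (lconst l1) (fun e i => lconst l2 e (tau (tl e) i)).

End Defs2.

(* A bundle with constant transition data has degree zero on every subcover
   (union of components of its cover), harmonic gauge changes preserve these
   degrees, and after a gauge change every subbundle is cut out by a subcover.
   Hence bundles of local systems are semistable of degree zero, and stable
   exactly when the cover has no proper subcover, i.e. when the monodromy is
   transitive.  Conversely, if E is semistable of degree zero then every
   subcover carries degree zero, so on each component of the cover the slopes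
   of E entering the vertices sum to zero; this demand is the divergence of an
   integer flow on the cover, and the flow gives the slopes of a harmonic gauge
   killing all transition slopes.  Finally, a harmonic gauge between two local
   systems is the same as an isomorphism of their covers together with a
   function a on the vertices of the cover and an integer harmonic 1-form m,
   the constants differing by the coboundary of a plus len * m: equality of
   the classes in Jac. *)

From Pilot Require Import Defs.
From HB Require Import structures.
From mathcomp Require Import all_boot all_order all_algebra all_fingroup.
From mathcomp Require Import reals.
From mathcomp Require Import zify ring lra.
(* Re-import so that [tperm] is the bundle permutation, not the transposition of [perm]. *)
Import Defs.
Set Implicit Arguments. Unset Strict Implicit. Unset Printing Implicit Defensive.
Import Order.TTheory GRing.Theory Num.Theory.
Local Open Scope ring_scope.

Section Flows.
Variables (W F : finType) (src dst : F -> W).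

Definition divergence (y : F -> int) (w : W) : int :=
  \sum_(f | src f == w) y f - \sum_(f | dst f == w) y f.

Definition flow_adj : rel W := fun x z =>
  [exists f, ((src f == x) && (dst f == z)) || ((src f == z) && (dst f == x))].

Lemma flow_adj_sym : symmetric flow_adj.
Proof. by move=> x z; apply/existsP/existsP => -[f xz]; exists f; rewrite orbC. Qed.

Definition dirac (x w : W) : int := if x == w then 1 else 0.

Lemma divergence0 w : divergence (fun=> 0) w = 0.
Proof. by rewrite /divergence !big1 // subrr. Qed.

Lemma divergenceD y1 y2 w :
  divergence (fun f => y1 f + y2 f) w = divergence y1 w + divergence y2 w.
Proof. rewrite /divergence !big_split /=; ring. Qed.

Lemma divergenceZ c y w : divergence (fun f => c * y f) w = c * divergence y w.
Proof. rewrite /divergence -!mulr_sumr; ring. Qed.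

Lemma divergence_unit f w :
  divergence (fun g => if g == f then 1 else 0) w = dirac (src f) w - dirac (dst f) w.
Proof.
have unit_sum (P : pred F) :
    \sum_(g | P g) (if g == f then 1 else 0) = if P f then 1 else 0 :> int.
  rewrite -big_mkcondr; case Pf: (P f).
    by rewrite (big_pred1 f) // => g /=; case: eqVneq => [->|]; rewrite ?Pf ?andbF.
  by rewrite big_pred0 // => g; case: eqVneq => [->|]; rewrite ?Pf ?andbF.
by rewrite /divergence !unit_sum.
Qed.

Lemma flow_along_path x z : connect flow_adj x z ->
  exists y, forall w, divergence y w = dirac x w - dirac z w.
Proof.
case/connectP => p; elim: p x => [|a p IH] x /=.
  by move=> _ ->; exists (fun=> 0) => w; rewrite divergence0 subrr.
case/andP => /existsP [f edge_f] path_p last_p.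
have [y div_y] := IH a path_p last_p.
have [y1 div_y1] : exists y1, forall w, divergence y1 w = dirac x w - dirac a w.
  case/orP: edge_f => /andP [/eqP src_f /eqP dst_f].
    by exists (fun g => if g == f then 1 else 0) => w; rewrite divergence_unit src_f dst_f.
  exists (fun g => -1 * (if g == f then 1 else 0)) => w.
  rewrite divergenceZ divergence_unit src_f dst_f; ring.
by exists (fun g => y1 g + y g) => w; rewrite divergenceD div_y div_y1; ring.
Qed.

(* Route each demand d w from w to the root of its component; the amounts
   arriving at a root add up to the component sum, which is zero. *)
Lemma flow_of_balanced_demand (d : W -> int) :
  (forall w0, \sum_(w | connect flow_adj w0 w) d w = 0) ->
  exists y, forall w, divergence y w = d w.
Proof.
move=> balanced.
pose r := fingraph.root flow_adj.
have [y div_y] : exists y, forall u,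
    divergence y u = \sum_(w <- enum W) d w * (dirac w u - dirac (r w) u).
  elim: (enum W) => [|w s [y div_y]].
    by exists (fun=> 0) => u; rewrite big_nil divergence0.
  have [y1 div_y1] := flow_along_path (connect_root flow_adj w).
  exists (fun f => d w * y1 f + y f) => u.
  by rewrite divergenceD divergenceZ div_y div_y1 big_cons.
exists y => u; rewrite div_y big_enum /=.
under eq_bigr do rewrite mulrBr.
rewrite sumrB (bigD1 u) //= /dirac eqxx mulr1 big1 ?addr0; last first.
  by move=> w /negbTE ->; rewrite mulr0.
rewrite (eq_bigr (fun w => if r w == u then d w else 0)); last first.
  by move=> w _; case: ifP; rewrite ?mulr1 ?mulr0.
rewrite -big_mkcond /=.
suff -> : \sum_(w | r w == u) d w = 0 by rewrite subr0.
case: (pickP (fun w => r w == u)) => [w0 /eqP r_w0 | none]; last by rewrite big_pred0.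
rewrite -[RHS](balanced w0); apply: eq_bigl => w /=.
rewrite -r_w0 eq_sym root_connect //.
by apply: sym_connect_sym; exact: flow_adj_sym.
Qed.

End Flows.

Section Gauges.
Variables (R : realType) (G : model R) (n : nat).
Local Notation V := (V G).
Local Notation Ed := (Ed G).
Local Notation tl := (@tl R G).
Local Notation hd := (@hd R G).

Hypothesis loopless : forall e : Ed, tl e != hd e.

Lemma sum_star (F : Ed -> int) v :
  \sum_(e | (tl e == v) || (hd e == v)) F e
    = \sum_(e | tl e == v) F e + \sum_(e | hd e == v) F e.
Proof.
rewrite (bigID (fun e => tl e == v)) /=; congr (_ + _); apply: eq_bigl => e /=.
  by case: (tl e == v); rewrite ?andbT ?andbF.
have := loopless e; case: (eqVneq (tl e) v) => [<-|_] /=; last by rewrite andbT.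
by rewrite eq_sym => /negbTE.
Qed.

(* The fibres [D v] of a union of connected components of the cover whose
   monodromy along the edge [e] is [s e]. *)
Definition subcover (s : Ed -> {perm 'I_n}) (D : V -> pred 'I_n) : Prop :=
  forall e i, D (tl e) i = D (hd e) (s e i).

Definition deg_on (A : tdata G n) (D : V -> pred 'I_n) : int :=
  \sum_(e : Ed) \sum_(i | D (tl e) i) tslp A e i.

Lemma subcover_predC s D : subcover s D -> subcover s (fun v i => ~~ D v i).
Proof. by move=> subD e i; rewrite subD. Qed.

Lemma deg_on_predT A : deg_on A (fun _ _ => true) = deg A.
Proof. by []. Qed.

Lemma deg_on_predC A D : deg_on A D + deg_on A (fun v i => ~~ D v i) = deg A.
Proof. by rewrite -big_split; apply: eq_bigr => e _; rewrite [RHS](bigID (D (tl e))). Qed.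

Lemma deg_on_ls l D : deg_on (bundle_of_ls l) D = 0.
Proof. by rewrite /deg_on big1 // => e _; rewrite big1. Qed.

Lemma deg_ls (l : ldata G n) : deg (bundle_of_ls l) = 0.
Proof. exact: (deg_on_ls l (fun _ _ => true)). Qed.

Definition gauge_transforms (P : gauge G n) (A A' : tdata G n) : Prop :=
  forall e, [/\ (tperm A' e * gperm P (hd e))%g = (gperm P (tl e) * tperm A e)%g,
     (forall i, toff A' e i + roff P (hd e) e (tperm A' e i)
                = roff P (tl e) e i + toff A e (gperm P (tl e) i))
   & (forall i, tslp A' e i + rslp P (hd e) e (tperm A' e i)
                = rslp P (tl e) e i + tslp A e (gperm P (tl e) i))].

Lemma gauge_permE P A A' : gauge_transforms P A A' ->
  forall e i, gperm P (hd e) (tperm A' e i) = tperm A e (gperm P (tl e) i).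
Proof. by move=> PAA' e i; have [perm_e _ _] := PAA' e; rewrite -permM perm_e permM. Qed.

Lemma subcover_gauge P A A' D D' : gauge_transforms P A A' ->
  (forall v i, D' v i = D v (gperm P v i)) ->
  subcover (tperm A) D <-> subcover (tperm A') D'.
Proof.
move=> /gauge_permE PAA' DD'; split=> subD e i; first by rewrite !DD' PAA' subD.
by have := subD e ((gperm P (tl e))^-1%g i); rewrite !DD' PAA' !permKV.
Qed.

(* Regrouped by vertex, the sum is a sum of star sums of harmonic functions. *)
Lemma harmonic_sum_slopes (P : gauge G n) (D : V -> pred 'I_n) :
  harmonic_gauge P ->
  \sum_(e : Ed) (\sum_(i | D (tl e) i) gslp P (tl e) e i
                 + \sum_(i | D (hd e) i) gslp P (hd e) e i) = 0.
Proof.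
move=> harmP; rewrite big_split /=.
rewrite (partition_big tl predT) // [X in _ + X](partition_big hd predT) //=.
rewrite -big_split /=; apply: big1 => v _.
rewrite (eq_bigr (fun e => \sum_(i | D v i) gslp P v e i)); last by move=> e /eqP ->.
rewrite [X in _ + X](eq_bigr (fun e => \sum_(i | D v i) gslp P v e i)).
  2: by move=> e /eqP ->.
rewrite exchange_big [X in _ + X]exchange_big -big_split /=.
by apply: big1 => i _; rewrite -sum_star harmP.
Qed.

Lemma deg_on_gauge P A A' D D' : harmonic_gauge P -> gauge_transforms P A A' ->
  (forall v i, D' v i = D v (gperm P v i)) -> subcover (tperm A') D' ->
  deg_on A D = deg_on A' D'.
Proof.
move=> harmP PAA' DD' subD'.
suff : deg_on A' D' - deg_on A D = 0 by move/eqP; rewrite subr_eq0 => /eqP.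
rewrite -(harmonic_sum_slopes D' harmP) /deg_on -sumrB; apply: eq_bigr => e _.
have -> : \sum_(k | D (tl e) k) tslp A e k
          = \sum_(i | D' (tl e) i) tslp A e (gperm P (tl e) i).
  rewrite (reindex_inj (@perm_inj _ (gperm P (tl e)))).
  by apply: eq_bigl => i; rewrite DD'.
have -> : \sum_(k | D' (hd e) k) gslp P (hd e) e k
          = \sum_(i | D' (tl e) i) gslp P (hd e) e (tperm A' e i).
  by rewrite (reindex_inj (@perm_inj _ (tperm A' e))); apply: eq_bigl => i; rewrite subD'.
rewrite -sumrB -big_split; apply: eq_bigr => i _ /=.
have [_ _ /(_ i)] := PAA' e; rewrite /rslp eqxx (negbTE (loopless e)) => slope_i; lia.
Qed.

Lemma bundle_iso_deg_on A A' D : bundle_iso A A' -> subcover (tperm A) D ->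
  exists2 D', subcover (tperm A') D' & deg_on A D = deg_on A' D'.
Proof.
case=> P [harmP PAA'] subD; pose D' v i := D v (gperm P v i).
have DD' v i : D' v i = D v (gperm P v i) by [].
have subD' := (subcover_gauge PAA' DD').1 subD.
by exists D'; last exact: deg_on_gauge DD' subD'.
Qed.

Lemma bundle_iso_deg_on_r A A' D' : bundle_iso A A' -> subcover (tperm A') D' ->
  exists2 D, subcover (tperm A) D & deg_on A D = deg_on A' D'.
Proof.
case=> P [harmP PAA'] subD'; pose D v k := D' v ((gperm P v)^-1%g k).
have DD' v i : D' v i = D v (gperm P v i) by rewrite /D permK.
have subD := (subcover_gauge PAA' DD').2 subD'.
by exists D; last exact: deg_on_gauge DD' subD'.
Qed.

Lemma bundle_iso_deg (A A' : tdata G n) : bundle_iso A A' -> deg A = deg A'.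
Proof.
case=> P [harmP PAA']; rewrite -!deg_on_predT.
exact: (@deg_on_gauge P A A' (fun _ _ => true) (fun _ _ => true)).
Qed.

Lemma bundle_iso_refl k (A : tdata G k) : bundle_iso A A.
Proof.
exists (Gauge (fun=> 1%g) (fun _ _ => 0) (fun _ _ _ => 0)); split=> [v i|e].
  by rewrite big1.
rewrite /roff /rslp /=; split=> [|i|i]; first by rewrite mulg1 mul1g.
  by rewrite mul0r addr0 !if_same perm1 addr0 add0r.
by rewrite oppr0 !if_same perm1 addr0 add0r.
Qed.

Definition perm_gauge (p : V -> {perm 'I_n}) : gauge G n :=
  Gauge p (fun _ _ => 0) (fun _ _ _ => 0).

Definition perm_conj (A : tdata G n) (p : V -> {perm 'I_n}) : tdata G n :=
  TData (fun e => p (tl e) * tperm A e * (p (hd e))^-1)%g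
        (fun e i => toff A e (p (tl e) i)) (fun e i => tslp A e (p (tl e) i)).

Lemma harmonic_perm_gauge p : harmonic_gauge (perm_gauge p).
Proof. by move=> v i; rewrite big1. Qed.

Lemma perm_gauge_transforms A p : gauge_transforms (perm_gauge p) A (perm_conj A p).
Proof.
move=> e; rewrite /roff /rslp /=; split=> [|i|i].
- by rewrite -mulgA mulVg mulg1.
- by rewrite mul0r addr0 !if_same addr0 add0r.
- by rewrite oppr0 !if_same addr0 add0r.
Qed.

Lemma bundle_iso_perm_conj A p : bundle_iso A (perm_conj A p).
Proof.
by exists (perm_gauge p); split; [exact: harmonic_perm_gauge | exact: perm_gauge_transforms].
Qed.

Lemma perm_front (D : pred 'I_n) :
  exists p : {perm 'I_n}, forall i : 'I_n, (i < #|D|)%N = D (p i).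
Proof.
set s := enum D ++ enum (predC D).
have s_perm : perm_eq s (ord_tuple n).
  apply: uniq_perm; rewrite ?val_ord_tuple ?enum_uniq //.
    by rewrite cat_uniq !enum_uniq andbT; apply/hasPn => x; rewrite !mem_enum.
  by move=> x; rewrite mem_cat !mem_enum /= orbN.
case/tuple_permP: s_perm => p s_p; exists p => i.
have s_i : nth (p i) s i = p i.
  rewrite s_p -(tnth_nth _ [tuple tnth (ord_tuple n) (p j) | j < n]).
  by rewrite tnth_mktuple tnth_ord_tuple.
rewrite -s_i nth_cat -cardE; case: ltnP => lt_iD.
  by move: lt_iD; rewrite cardE => /(mem_nth (p i)); rewrite mem_enum => D_i; symmetry.
have lt_i_C : (i - #|D| < size (enum (predC D)))%N.
  by rewrite -cardE -(ltn_add2l #|D|) cardC card_ord subnKC // ltn_ord.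
by move: (mem_nth (p i) lt_i_C); rewrite mem_enum /= => /negbTE.
Qed.

Section Narrow.
Variables (m : nat) (le_mn : (m <= n)%N) (s : {perm 'I_n}).
Hypothesis s_stable : forall i : 'I_n, (i < m)%N -> (s i < m)%N.

Definition narrow_fun (i : 'I_m) : 'I_m := insubd i (val (s (widen_ord le_mn i))).

Lemma narrow_funE i : val (narrow_fun i) = val (s (widen_ord le_mn i)).
Proof. by rewrite val_insubd s_stable //= ltn_ord. Qed.

Lemma narrow_fun_inj : injective narrow_fun.
Proof.
move=> i j /(congr1 val); rewrite !narrow_funE => /val_inj /perm_inj /(congr1 val).
by move=> /= ij; apply: val_inj.
Qed.

Definition perm_narrow : {perm 'I_m} := perm narrow_fun_inj.

Lemma perm_narrowE i : val (perm_narrow i) = val (s (widen_ord le_mn i)).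
Proof. by rewrite permE narrow_funE. Qed.

End Narrow.

Definition upper_block m (E' : tdata G n) (F' : tdata G m) : Prop :=
  forall e : Ed,
    (forall j : 'I_n, (m <= j)%N -> (m <= tperm E' e j)%N) /\
    (forall (i : 'I_m) (j : 'I_n), val i = val j ->
       [/\ val (tperm E' e j) = val (tperm F' e i),
           toff E' e j = toff F' e i & tslp E' e j = tslp F' e i]).

Lemma upper_block_subcover m E' (F' : tdata G m) :
  upper_block E' F' -> subcover (tperm E') (fun _ j => (j < m)%N).
Proof.
move=> block e j /=; case: (ltnP j m) => [lt_jm | le_mj].
  by have [_ /(_ (Ordinal lt_jm) j erefl) [-> _ _]] := block e; rewrite ltn_ord.
by have [/(_ j le_mj) le_m_sj _] := block e; rewrite ltnNge le_m_sj.
Qed.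

Lemma upper_block_deg m (le_mn : (m <= n)%N) E' (F' : tdata G m) :
  upper_block E' F' -> deg F' = deg_on E' (fun _ j => (j < m)%N).
Proof.
move=> block; apply: eq_bigr => e _ /=; rewrite (big_ord_narrow le_mn).
by apply: eq_bigr => i _; have [_ /(_ i (widen_ord le_mn i) erefl) [_ _ ->]] := block e.
Qed.

End Gauges.

Section Bundles.
Variables (R : realType) (G : model R) (n : nat).
Local Notation V := (V G).
Local Notation Ed := (Ed G).
Local Notation tl := (@tl R G).
Local Notation hd := (@hd R G).
Local Notation len := (@len R G).

Hypothesis loopless : forall e : Ed, tl e != hd e.
Hypothesis connected : forall x y : V, connect (@adjacent R G) x y.

Lemma connected_const (f : V -> nat) :
  (forall e, f (tl e) = f (hd e)) -> forall x y, f x = f y.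
Proof.
move=> f_edge x y; case/connectP: (connected x y) => p + ->.
elim: p x => //= z p IH x /andP [/existsP [e] xz /IH <-].
by case/orP: xz => /andP [/eqP <- /eqP <-].
Qed.

Lemma subcover_card (s : Ed -> {perm 'I_n}) (D : V -> pred 'I_n) :
  subcover s D -> forall v w, #|D v| = #|D w|.
Proof.
move=> subD; apply: connected_const => e.
rewrite -!sum1_card [RHS](reindex_inj (@perm_inj _ (s e))) /=.
by apply: eq_bigl => i; rewrite -!topredE /= subD.
Qed.

Lemma subbundle_of_subcover (E : tdata G n) (D : V -> pred 'I_n) :
  subcover (tperm E) D -> forall v, exists F : tdata G #|D v|, subbundle F E /\ deg F = deg_on E D.
Proof.
move=> subD v; set m := #|D v|.
have le_mn : (m <= n)%N by rewrite -[n]card_ord max_card.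
have [p Dp] : exists p : V -> {perm 'I_n}, forall w (i : 'I_n), (i < m)%N = D w (p w i).
  have front w : exists p : {perm 'I_n}, forall i : 'I_n, (i < m)%N = D w (p i).
    by rewrite /m (subcover_card subD v w); exact: perm_front.
  exact: fin_all_exists front.
pose E' := perm_conj E p.
have PEE' := perm_gauge_transforms E p.
have subD' : subcover (tperm E') (fun _ i => (i < m)%N).
  exact: (subcover_gauge PEE' Dp).1 subD.
have stable_m e (i : 'I_n) : (i < m)%N -> (tperm E' e i < m)%N.
  by move=> lt_im; move: (subD' e i) => /= <-.
pose F := TData (fun e => perm_narrow le_mn (stable_m e))
  (fun e i => toff E' e (widen_ord le_mn i)) (fun e i => tslp E' e (widen_ord le_mn i)).
have block : upper_block E' F.
  move=> e; split=> [j le_mj | i j ij].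
    by move: (subD' e j) => /=; rewrite ltnNge le_mj /= => /esym/negbT; rewrite -leqNgt.
  have -> : j = widen_ord le_mn i by apply: val_inj.
  by split=> //=; rewrite perm_narrowE.
exists F; split.
  split=> //; exists E', F.
  by split=> //; [exact: bundle_iso_perm_conj | exact: bundle_iso_refl].
rewrite (upper_block_deg le_mn block); symmetry.
exact: (deg_on_gauge loopless (harmonic_perm_gauge p) PEE' Dp subD').
Qed.

Variable base : V.

Lemma semistable_deg_on (E : tdata G n) (D : V -> pred 'I_n) :
  semistable E -> deg E = 0 -> subcover (tperm E) D -> deg_on E D = 0.
Proof.
move=> ssE degE subD.
have deg_on_le0 D0 : subcover (tperm E) D0 -> deg_on E D0 <= 0.
  move=> subD0; have [F [subF <-]] := subbundle_of_subcover subD0 base.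
  case: (posnP #|D0 base|) => [rk0 | rk_gt0].
    rewrite /deg big1 // => e _; apply: big1 => i.
    by have := ltn_ord i; rewrite [X in (_ < X)%N]rk0.
  have := ssE _ F rk_gt0 subF.
  by rewrite /mu degE mul0r ler_pdivrMr ?ltr0n // mul0r lerz0.
have := deg_on_predC E D; rewrite degE.
have := deg_on_le0 _ subD; have := deg_on_le0 _ (subcover_predC subD); lia.
Qed.

Definition cover_src (f : Ed * 'I_n) : V * 'I_n := (tl f.1, f.2).
Definition cover_dst (s : Ed -> {perm 'I_n}) (f : Ed * 'I_n) : V * 'I_n :=
  (hd f.1, s f.1 f.2).
Definition cover_adj (s : Ed -> {perm 'I_n}) := flow_adj cover_src (cover_dst s).

Lemma cover_adj_edge (s : Ed -> {perm 'I_n}) e i : cover_adj s (tl e, i) (hd e, s e i).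
Proof. by apply/existsP; exists (e, i); rewrite /cover_src /cover_dst /= !eqxx. Qed.

Lemma subcover_component (s : Ed -> {perm 'I_n}) x :
  subcover s (fun v k => connect (cover_adj s) x (v, k)).
Proof.
have sym : connect_sym (cover_adj s) by apply: sym_connect_sym; exact: flow_adj_sym.
move=> e i /=; apply/idP/idP => conn_x.
  exact: connect_trans conn_x (connect1 (cover_adj_edge s e i)).
by apply: connect_trans conn_x _; rewrite sym; exact: connect1 (cover_adj_edge s e i).
Qed.

Lemma sum_pair (P : pred (Ed * 'I_n)) (y : Ed * 'I_n -> int) :
  \sum_(f | P f) y f = \sum_(e : Ed) \sum_(i | P (e, i)) y (e, i).
Proof. by rewrite pair_big_dep /=; apply: eq_big => -[e i]. Qed.

Lemma sum_cover_src (y : Ed * 'I_n -> int) v k :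
  \sum_(f | cover_src f == (v, k)) y f = \sum_(e | tl e == v) y (e, k).
Proof.
rewrite sum_pair [RHS]big_mkcond; apply: eq_bigr => e _ /=.
case: eqVneq => [<-|tl_v]; first by apply: big_pred1 => i; rewrite xpair_eqE eqxx.
by apply: big_pred0 => i; rewrite xpair_eqE (negbTE tl_v).
Qed.

Lemma sum_cover_dst (s : Ed -> {perm 'I_n}) (y : Ed * 'I_n -> int) v k :
  \sum_(f | cover_dst s f == (v, k)) y f = \sum_(e | hd e == v) y (e, (s e)^-1%g k).
Proof.
rewrite sum_pair [RHS]big_mkcond; apply: eq_bigr => e _ /=.
case: eqVneq => [<-|hd_v]; last by apply: big_pred0 => i; rewrite xpair_eqE (negbTE hd_v).
apply: big_pred1 => i; rewrite xpair_eqE eqxx /=.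
by apply/eqP/eqP => [<-|->]; rewrite ?permK ?permKV.
Qed.

(* [y (e, i)] is the outgoing slope, at the tail of the cover edge [(e, i)],
   of a harmonic gauge killing the transition slopes of [E]. *)
Lemma ls_of_flow (E : tdata G n) (y : Ed * 'I_n -> int) :
  (forall w, divergence cover_src (cover_dst (tperm E)) y w
             = \sum_(f | cover_dst (tperm E) f == w) tslp E f.1 f.2) ->
  exists l : ldata G n, bundle_iso E (bundle_of_ls l).
Proof.
move=> div_y.
pose slp v e k := if tl e == v then y (e, k)
                  else - (y (e, (tperm E e)^-1%g k) + tslp E e ((tperm E e)^-1%g k)).
pose P := Gauge (fun=> 1%g) (fun _ _ => 0) slp.
exists (LData (tperm E)
  (fun e i => toff E e i - (slp (hd e) e (tperm E e i))%:~R * len e)), P.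
split=> [v k | e] /=.
  rewrite (sum_star loopless) (eq_bigr (fun e => y (e, k))).
    2: by move=> e tl_v; rewrite /slp tl_v.
  rewrite [X in _ + X](eq_bigr (fun e =>
    - (y (e, (tperm E e)^-1%g k) + tslp E e ((tperm E e)^-1%g k)))).
    2: by move=> e /eqP <-; rewrite /slp (negbTE (loopless e)).
  move: (div_y (v, k)); rewrite /divergence sum_cover_src !sum_cover_dst /=.
  by rewrite sumrN big_split /= => <-; ring.
rewrite /roff /rslp /= eqxx (negbTE (loopless e)).
split=> [|i|i]; rewrite ?mulg1 ?mul1g // perm1; first ring.
by rewrite /slp (negbTE (loopless e)) eqxx permK; ring.
Qed.

Lemma ls_of_semistable (E : tdata G n) : semistable E -> deg E = 0 ->
  exists l : ldata G n, bundle_iso E (bundle_of_ls l).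
Proof.
move=> ssE degE; set s := tperm E.
pose d w := \sum_(f | cover_dst s f == w) tslp E f.1 f.2.
suff [y div_y] : exists y, forall w, divergence cover_src (cover_dst s) y w = d w.
  exact: ls_of_flow div_y.
apply: flow_of_balanced_demand => x.
set C := fun w => connect (cover_adj s) x w.
have subC := subcover_component s x.
rewrite -[RHS](semistable_deg_on ssE degE subC).
transitivity (\sum_(f | C (cover_dst s f)) tslp E f.1 f.2).
  rewrite (partition_big (cover_dst s) C) //; apply: eq_bigr => w Cw.
  by apply: eq_bigl => f; case: eqVneq => [->|_]; rewrite ?andbF ?andbT // Cw.
transitivity (\sum_(f | C (cover_src f)) tslp E f.1 f.2).
  by apply: eq_bigl => -[e i]; rewrite /C /cover_src /cover_dst /= -subC.
by rewrite sum_pair.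
Qed.

Lemma ls_semistable (E : tdata G n) (l : ldata G n) :
  bundle_iso E (bundle_of_ls l) -> semistable E /\ deg E = 0.
Proof.
move=> isoL; have degE : deg E = 0 by rewrite (bundle_iso_deg loopless isoL) deg_ls.
split=> // m F _ [le_mn [E' [F' [isoE' isoF' block]]]].
suff degF : deg F = 0 by rewrite /mu degF degE !mul0r.
rewrite (bundle_iso_deg loopless isoF') (upper_block_deg le_mn block).
have [D subD <-] := bundle_iso_deg_on_r loopless isoE' (upper_block_subcover block).
have [D' _ ->] := bundle_iso_deg_on loopless isoL subD.
exact: deg_on_ls.
Qed.

Lemma subcover_walk (l : ldata G n) D w v0 v : subcover (lperm l) D ->
  walk_end v0 w = Some v -> forall k, D v0 k = D v (monodromy l w k).
Proof.
move=> subD; elim: w v0 => [|[e b] w IH] v0 /=; first by case=> <- k; rewrite perm1.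
case: eqVneq => // src_v0 end_w k; rewrite permM -(IH _ end_w).
move: src_v0 {end_w}; rewrite /step_src /step_dst /step_perm.
by case: b => /= <-; rewrite subD ?permKV.
Qed.

Lemma walk_of_connect (l : ldata G n) v0 i v k :
  connect (cover_adj (lperm l)) (v0, i) (v, k) ->
  exists w, walk_end v0 w = Some v /\ monodromy l w i = k.
Proof.
case/connectP => p; elim: p v0 i => [|[u j] p IH] v0 i /=.
  by move=> _ [-> ->]; exists [::]; rewrite perm1.
case/andP => /existsP [[e j']] edge path_p last_p.
have [w [end_w mono_w]] := IH u j path_p last_p.
rewrite /cover_src /cover_dst /= in edge.
case/orP: edge => /andP [/eqP [? ?] /eqP [? ?]]; subst.
  exists ((e, true) :: w).
  by rewrite /= /step_src /step_dst /step_perm /= eqxx permM.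
exists ((e, false) :: w).
by rewrite /= /step_src /step_dst /step_perm /= eqxx permM permK.
Qed.

Lemma stable_indecomposable (l : ldata G n) :
  stable (bundle_of_ls l) -> indecomposable l.
Proof.
move=> stable_l v0 i j.
case conn_ij: (connect (cover_adj (lperm l)) (v0, i) (v0, j)); first exact: walk_of_connect.
pose D v k := connect (cover_adj (lperm l)) (v0, i) (v, k).
have subD : subcover (tperm (bundle_of_ls l)) D := subcover_component (lperm l) (v0, i).
have [F [subF degF]] := subbundle_of_subcover subD v0.
have rk_gt0 : (0 < #|D v0|)%N by apply/card_gt0P; exists i; exact: connect0.
have rk_lt_n : (#|D v0| < n)%N.
  have j_notin : j \notin D v0 by rewrite -topredE /= /D conn_ij.
  by have := max_card [predU1 j & D v0]; rewrite card_ord cardU1 j_notin.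
have := stable_l _ F rk_gt0 rk_lt_n subF.
by rewrite /mu degF deg_on_ls deg_ls !mul0r ltxx.
Qed.

Lemma indecomposable_stable (l : ldata G n) :
  indecomposable l -> stable (bundle_of_ls l).
Proof.
move=> indec m F m_gt0 m_lt_n [le_mn [E' [F' [[P [_ PLE]] _ block]]]].
pose D v k := ((gperm P v)^-1%g k < m)%N.
have DD' v (i : 'I_n) : (i < m)%N = D v (gperm P v i) by rewrite /D permK.
have subD : subcover (lperm l) D.
  exact: (subcover_gauge (D' := fun _ i => (i < m)%N) PLE DD').2 (upper_block_subcover block).
pose i := gperm P base (Ordinal (ltn_trans m_gt0 m_lt_n)).
pose j := gperm P base (Ordinal m_lt_n).
have [w [closed_w mono_w]] := indec base i j.
have := subcover_walk subD closed_w i.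
by rewrite mono_w /D /i /j !permK /= m_gt0 ltnn.
Qed.

Lemma sum_perm_fibre (s : {perm 'I_n}) (f : 'I_n -> int) j :
  \sum_(i | s i == j) f i = f (s^-1%g j).
Proof.
by rewrite (big_pred1 (s^-1%g j)) // => i /=; apply/eqP/eqP => [<-|->]; rewrite ?permK ?permKV.
Qed.

Lemma harmonic_gauge_flow (l : ldata G n) (P : gauge G n) (tau : V -> {perm 'I_n})
    (m : Ed -> 'I_n -> int) :
  (forall e i, gslp P (tl e) e (tau (tl e) i) = - m e i) ->
  (forall e i, gslp P (hd e) e (tau (hd e) (lperm l e i)) = m e i) ->
  harmonic_gauge P <-> cover_int_flow l m.
Proof.
move=> slp_tl slp_hd.
have star v j : \sum_(e | (tl e == v) || (hd e == v)) gslp P v e (tau v j)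
    = \sum_(e | hd e == v) \sum_(i | lperm l e i == j) m e i - \sum_(e | tl e == v) m e j.
  rewrite (sum_star loopless) addrC -sumrN; congr (_ + _); apply: eq_bigr => e /eqP <-.
    by rewrite sum_perm_fibre -slp_hd permKV.
  exact: slp_tl.
split=> [harmP v j | flow v k].
  by apply/eqP; rewrite eq_sym -subr_eq0 -star harmP.
by have := star v ((tau v)^-1%g k); rewrite permKV flow subrr.
Qed.

Lemma same_cover_jac_of_iso (l1 l2 : ldata G n) :
  bundle_iso (bundle_of_ls l1) (bundle_of_ls l2) -> same_cover_same_jac l1 l2.
Proof.
case=> P [harmP PL]; pose tau v := ((gperm P v)^-1)%g.
have tauE e i : lperm l2 e (tau (tl e) i) = tau (hd e) (lperm l1 e i).
  by apply: (@perm_inj _ (gperm P (hd e))); rewrite (gauge_permE PL) !permKV.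
have slp e i : gslp P (hd e) e (lperm l2 e i) = - gslp P (tl e) e i.
  have [_ _ /(_ i)] := PL e; rewrite /rslp /= eqxx (negbTE (loopless e)) add0r addr0 => <-.
  by rewrite opprK.
pose m e i := gslp P (hd e) e (tau (hd e) (lperm l1 e i)).
exists tau; split; first by move=> e; apply/permP => i; rewrite !permM tauE.
exists (fun v j => gval P v (tau v j)), m; split.
  apply: (harmonic_gauge_flow (tau := tau) _ _).1 harmP => // e i.
  by rewrite /m -tauE slp opprK.
move=> e i; have [_ /(_ (tau (tl e) i)) + _] := PL e.
by rewrite /roff /= eqxx (negbTE (loopless e)) permKV tauE /m; lra.
Qed.

Lemma iso_of_same_cover_jac (l1 l2 : ldata G n) :
  same_cover_same_jac l1 l2 -> bundle_iso (bundle_of_ls l1) (bundle_of_ls l2).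
Proof.
case=> tau [cov [a [m [flow cocycle]]]].
have tauE e k : ((tau (hd e))^-1 (lperm l2 e k) = lperm l1 e ((tau (tl e))^-1 k))%g.
  apply: (@perm_inj _ (tau (hd e))); rewrite permKV.
  by move/permP: (cov e) => /(_ ((tau (tl e))^-1%g k)); rewrite !permM permKV.
pose P := Gauge (fun v => (tau v)^-1)%g (fun v k => a v ((tau v)^-1%g k))
  (fun v e k => if tl e == v then - m e ((tau v)^-1%g k)
                else m e ((lperm l1 e)^-1%g ((tau v)^-1%g k))).
exists P; split.
  apply: (harmonic_gauge_flow (tau := tau) _ _).2 flow => e i /=.
    by rewrite eqxx permK.
  by rewrite (negbTE (loopless e)) !permK.
move=> e; rewrite /roff /rslp /= eqxx (negbTE (loopless e)).
split=> [|k|k]; first by apply/permP => k; rewrite !permM tauE.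
  have := cocycle e ((tau (tl e))^-1%g k); rewrite permKV tauE permK; lra.
by rewrite tauE permK add0r addr0.
Qed.

End Bundles.

Theorem theorem5p4 (R : realType) (G : model R) (n : nat) :
  simple_connected_model G -> (0 < n)%N ->
  [/\ (forall E : tdata G n,
         (exists l : ldata G n, bundle_iso E (bundle_of_ls l)) <->
         (semistable E /\ deg E = 0%R)),
      (forall l : ldata G n, stable (bundle_of_ls l) <-> indecomposable l)
    & (forall l1 l2 : ldata G n,
         bundle_iso (bundle_of_ls l1) (bundle_of_ls l2) <-> same_cover_same_jac l1 l2)].
Proof.
case=> /card_gt0P [v0 _] _ loopless _ connected _.
split=> [E | l | l1 l2]; split.
- by case=> l /(ls_semistable loopless).
- by case=> ssE /(ls_of_semistable loopless connected v0 ssE).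
- by move/(stable_indecomposable loopless connected).
- by move/(indecomposable_stable v0).
- by move/(same_cover_jac_of_iso loopless).
- by move/(iso_of_same_cover_jac loopless).
Qed.
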